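(* Let $0.5208<\sigma_0<0.9723$, $10^3\le H<H_0$ with $H_0=3.061\cdot10^{10}$, and $T\ge H_0$. Then \[ \frac{2}{T-H}\int_H^T\sum_{1\le n<m<t}\frac{\cos(t\log(m/n))}{(nm)^{\sigma_0}}\,dt\le \epsilon_1(\sigma_0,H). \]
   Context: Here $H_0=3.061\cdot10^{10}$, $\zeta$ is the Riemann zeta function, and \[ \epsilon_1(\sigma_0,H)=\frac{4H_0}{H_0-H}\Big(\frac{(\log H_0)H_0^{1-2\sigma_0}}{2(1-\sigma_0)}-\frac{(2\sigma_0-1)\log H_0}{2(1-\sigma_0)H_0}+\frac{\max\big(0,\frac{1-3\sigma_0+3\sigma_0^2}{2(1-\sigma_0)^2}-\frac{\zeta(2\sigma_0)}{2}\big)}{H_0}+\frac{(2-\sigma_0)H_0^{1-2\sigma_0}}{2(1-\sigma_0)^2}-\frac{\sigma_0H_0^{-\sigma_0}}{(1-\sigma_0)^2}+\frac{H_0^{-2\sigma_0}}{2(2\sigma_0-1)}+\frac{H_0^{-2\sigma_0-1}}{2}\Big). \] The inner sum is over pairs of integers $(n,m)$ with $1\le n<m<t$. *)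

From Stdlib Require Import Reals Lra Lia ZArith ClassicalEpsilon.
Open Scope R_scope.

Definition H0 : R := IZR 30610000000.

(* Riemann zeta for real s > 1 (the only case used: s = 2 sigma_0 > 1),
   defined as the limit of the partial sums  sum_{k=1}^{N+1} k^{-s}. *)
Definition zeta_partial (s : R) (N : nat) : R :=
  sum_f_R0 (fun k => / Rpower (INR (k + 1)) s) N.

Definition riemann_zeta (s : R) : R :=
  epsilon (inhabits 0) (fun z => Un_cv (zeta_partial s) z).

Definition eps1 (s H : R) : R :=
  4 * H0 / (H0 - H) *
  ( ln H0 * Rpower H0 (1 - 2 * s) / (2 * (1 - s))
    - (2 * s - 1) * ln H0 / (2 * (1 - s) * H0)
    + Rmax 0 ((1 - 3 * s + 3 * s ^ 2) / (2 * (1 - s) ^ 2)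
              - riemann_zeta (2 * s) / 2) / H0
    + (2 - s) * Rpower H0 (1 - 2 * s) / (2 * (1 - s) ^ 2)
    - s * Rpower H0 (- s) / (1 - s) ^ 2
    + Rpower H0 (- 2 * s) / (2 * (2 * s - 1))
    + Rpower H0 (- 2 * s - 1) / 2 ).

(* All integers m < t satisfy m <= Z.to_nat (up t), so the finite range
   0..Z.to_nat (up t) for m (and 0..m for n) covers all pairs; pairs
   violating 1 <= n < m < t contribute 0. *)
Definition pair_term (s t : R) (m n : nat) : R :=
  if Rlt_dec (INR m) t then
    if andb (Nat.ltb 0 n) (Nat.ltb n m) then
      cos (t * ln (INR m / INR n)) / Rpower (INR n * INR m) s
    else 0
  else 0.

Definition inner_sum (s t : R) : R :=
  sum_f_R0 (fun m => sum_f_R0 (fun n => pair_term s t m n) m) (Z.to_nat (up t)).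

From Coquelicot Require Import Coquelicot.
From Stdlib Require Import Reals Lra Lia ZArith ClassicalEpsilon.
Open Scope R_scope.

(* Write S(t) = sum_{1<=n<m<t} cos(t log(m/n)) / (nm)^s.
   1. Integration.  For fixed n < m the summand vanishes for t <= m and is
      cos(t l)/(nm)^s, l = log(m/n), afterwards; its integral over [H,T] is at
      most 2/((nm)^s l).  Hence int_H^T S <= 2 W, W = sum_{1<=n<m<T} weights.
   2. Splitting the weights.  Since 1/log(m/n) <= m/(m-n) = n/(m-n) + 1,
      W <= (sum_{n<T} n^(1-2s)) (sum_{k<T} 1/k) + sum_{n<m<T} (nm)^(-s),
      the first product dominating a Cauchy product and the second sum being
      ((sum n^(-s))^2 - sum n^(-2s)) / 2.
   3. Sums versus integrals.  Telescoping gives sum_{p<T} p^(e-1) <=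
      1 + (T^e-1)/e, sum_{p<T} 1/p <= 1 + log T and
      sum_{p<T} p^(-2s) >= zeta(2s) - T^(-2s) - T^(1-2s)/(2s-1).
   4. Monotonicity.  The resulting bound is T * Phi(log T) + c0 where Phi is
      decreasing on [23, oo) (its derivative is negative there whenever
      0.5208 < s < 0.9723) and log H0 >= 23; so it is at most T * Br with Br
      the same expression at T = H0.  Finally T/(T-H) <= H0/(H0-H), and
      4 H0/(H0-H) * Br is exactly eps1(s, H). *)

Lemma ln_le_sub1 x : 0 < x -> ln x <= x - 1.
Proof. intros Hx. pose proof (exp_ineq1_le (ln x)). rewrite exp_ln in H; lra. Qed.

Lemma exp_tangent a c : exp c * (1 + a - c) <= exp a.
Proof.
  replace a with (c + (a - c)) at 2 by ring. rewrite exp_plus.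
  pose proof (exp_ineq1_le (a - c)). pose proof (exp_pos c).
  apply Rmult_le_compat_l; lra.
Qed.

Lemma Rpower_pos x y : 0 < Rpower x y.
Proof. unfold Rpower; apply exp_pos. Qed.

Lemma Rpower_sub1 p e : 0 < p -> Rpower p (e - 1) = Rpower p e / p.
Proof. intros Hp. unfold Rminus. rewrite Rpower_plus, Rpower_Ropp, Rpower_1 by lra. reflexivity. Qed.

(* Concavity of y |-> y^e for 0 <= e <= 1 (Bernoulli's inequality): a convex
   combination of the tangent bounds of exp at e ln y. *)
Lemma Rpower_concave y e : 0 < y -> 0 <= e <= 1 -> Rpower y e <= 1 + e * (y - 1).
Proof.
  intros Hy He. unfold Rpower.
  pose proof (exp_tangent (ln y) (e * ln y)) as Ty.
  pose proof (exp_tangent 0 (e * ln y)) as T1.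
  rewrite exp_ln in Ty by lra. rewrite exp_0 in T1.
  assert (e * (exp (e * ln y) * (1 + ln y - e * ln y))
          + (1 - e) * (exp (e * ln y) * (1 + 0 - e * ln y)) <= e * y + (1 - e) * 1).
  { apply Rplus_le_compat; apply Rmult_le_compat_l; lra. }
  lra.
Qed.

(* For 0 < e < 1 the increment of x^e over [p-1, p] is at least e p^(e-1):
   the discrete form of (x^e)' = e x^(e-1) for the decreasing integrand. *)
Lemma Rpower_increment p e : 1 < p -> 0 < e < 1 ->
  e * Rpower p (e - 1) <= Rpower p e - Rpower (p - 1) e.
Proof.
  intros Hp He.
  assert (Hy : 0 < (p - 1) / p) by (apply Rdiv_lt_0_compat; lra).
  pose proof (Rpower_concave ((p - 1) / p) e Hy ltac:(lra)) as Hc.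
  assert (E : Rpower (p - 1) e = Rpower p e * Rpower ((p - 1) / p) e).
  { rewrite Rpower_mult_distr by lra. f_equal. field. lra. }
  rewrite E, Rpower_sub1 by lra.
  pose proof (Rpower_pos p e).
  assert (Rpower p e * Rpower ((p - 1) / p) e <= Rpower p e * (1 + e * ((p - 1) / p - 1)))
    by (apply Rmult_le_compat_l; lra).
  replace (Rpower p e * (1 + e * ((p - 1) / p - 1)))
    with (Rpower p e - e * (Rpower p e / p)) in H0 by (field; lra).
  lra.
Qed.

(* For q > 1: m^(-q) <= ((m-1)^(1-q) - m^(1-q))/(q-1), the discrete form of
   x^(-q) = -(x^(1-q))'/(q-1) for the decreasing integrand. *)
Lemma Rpower_tail_increment m q : 1 < m -> 1 < q ->
  Rpower m (- q) <= (Rpower (m - 1) (1 - q) - Rpower m (1 - q)) / (q - 1).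
Proof.
  intros Hm Hq. apply (Rmult_le_reg_l (q - 1)); [lra|].
  replace ((q - 1) * ((Rpower (m - 1) (1 - q) - Rpower m (1 - q)) / (q - 1)))
    with (Rpower (m - 1) (1 - q) - Rpower m (1 - q)) by (field; lra).
  assert (Hy : 0 < (m - 1) / m) by (apply Rdiv_lt_0_compat; lra).
  assert (E : Rpower (m - 1) (1 - q) = Rpower m (1 - q) * Rpower ((m - 1) / m) (1 - q)).
  { rewrite Rpower_mult_distr by lra. f_equal. field. lra. }
  assert (E2 : Rpower m (- q) = Rpower m (1 - q) / m).
  { replace (- q) with ((1 - q) - 1) by ring. apply Rpower_sub1; lra. }
  rewrite E, E2.
  assert (Hb : 1 + (q - 1) / m <= Rpower ((m - 1) / m) (1 - q)).
  { unfold Rpower. pose proof (exp_ineq1_le ((1 - q) * ln ((m - 1) / m))).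
    pose proof (ln_le_sub1 _ Hy).
    assert ((q - 1) / m <= (1 - q) * ln ((m - 1) / m)).
    { replace ((1 - q) * ln ((m - 1) / m)) with ((q - 1) * (- ln ((m - 1) / m))) by ring.
      replace ((q - 1) / m) with ((q - 1) * (1 - (m - 1) / m)) by (field; lra).
      apply Rmult_le_compat_l; lra. }
    lra. }
  pose proof (Rpower_pos m (1 - q)).
  assert (Rpower m (1 - q) * (1 + (q - 1) / m) <= Rpower m (1 - q) * Rpower ((m - 1) / m) (1 - q))
    by (apply Rmult_le_compat_l; lra).
  replace (Rpower m (1 - q) * (1 + (q - 1) / m))
    with (Rpower m (1 - q) + (q - 1) * (Rpower m (1 - q) / m)) in H0 by (field; lra).
  lra.
Qed.

Lemma inv_le_ln_increment k : 1 < k -> / k <= ln k - ln (k - 1).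
Proof.
  intros Hk. assert (0 < (k - 1) / k) by (apply Rdiv_lt_0_compat; lra).
  pose proof (ln_le_sub1 _ H). rewrite ln_div in H0 by lra.
  replace ((k - 1) / k - 1) with (- / k) in H0 by (field; lra). lra.
Qed.

(* 1/log(m/n) <= m/(m-n), from log(n/m) <= n/m - 1. *)
Lemma inv_ln_ratio n m : 0 < n -> n < m -> / ln (m / n) <= m / (m - n).
Proof.
  intros Hn Hnm.
  assert (0 < n / m) by (apply Rdiv_lt_0_compat; lra).
  pose proof (ln_le_sub1 _ H).
  assert (ln (m / n) = - ln (n / m)) by (rewrite !ln_div by lra; ring).
  assert ((m - n) / m <= ln (m / n)).
  { rewrite H1. replace ((m - n) / m) with (- (n / m - 1)) by (field; lra). lra. }
  assert (0 < (m - n) / m) by (apply Rdiv_lt_0_compat; lra).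
  replace (m / (m - n)) with (/ ((m - n) / m)) by (field; lra).
  apply Rinv_le_contravar; lra.
Qed.

Lemma Rpower_neg_anti a b q : 0 < a -> a <= b -> 0 <= q -> Rpower b (- q) <= Rpower a (- q).
Proof.
  intros Ha Hab Hq. rewrite !Rpower_Ropp. apply Rinv_le_contravar; [apply Rpower_pos|].
  apply Rle_Rpower_l; lra.
Qed.

(* log H0 >= 23, via exp(1/16) <= 16/15 and (16/15)^368 <= H0. *)
Lemma ln_H0_ge : 23 <= ln H0.
Proof.
  assert (E : exp (1/16) <= 16/15).
  { pose proof (exp_ineq1_le (- (1/16))). rewrite exp_Ropp in H.
    pose proof (exp_pos (1/16)).
    assert (15/16 * exp (1/16) <= 1).
    { apply (Rmult_le_reg_r (/ exp (1/16))); [apply Rinv_0_lt_compat; lra|].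
      rewrite Rmult_assoc, Rinv_r by lra. lra. }
    lra. }
  assert (E2 : exp 23 = exp (1/16) ^ 368).
  { rewrite <- Rpower_pow by apply exp_pos. unfold Rpower. rewrite ln_exp. f_equal.
    replace (INR 368) with 368 by (simpl; ring). field. }
  assert (exp (1/16) ^ 368 <= (16/15) ^ 368) by (apply pow_incr; split; [left; apply exp_pos | exact E]).
  assert ((16/15) ^ 368 <= H0) by (unfold H0; lra).
  rewrite <- (ln_exp 23). apply ln_le; [apply exp_pos | lra].
Qed.

Lemma sum_f_R0_mono_nonneg (f : nat -> R) K M : (forall p, 0 <= f p) -> (K <= M)%nat ->
  sum_f_R0 f K <= sum_f_R0 f M.
Proof.
  intros Hf HKM. induction HKM; [lra|]. simpl. pose proof (Hf (S m)). lra.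
Qed.

Lemma sum_f_R0_extend_zero (f : nat -> R) K M : (K <= M)%nat ->
  (forall m, (K < m)%nat -> f m = 0) -> sum_f_R0 f M = sum_f_R0 f K.
Proof.
  intros HKM Hz. induction HKM; [reflexivity|].
  simpl. rewrite IHHKM, Hz by lia. ring.
Qed.

Definition cutoff (T : R) (p : nat) (x : R) : R :=
  if Nat.ltb 0 p then (if Rlt_dec (INR p) T then x else 0) else 0.

Lemma cutoff_nonneg T p x : 0 <= x -> 0 <= cutoff T p x.
Proof. intros. unfold cutoff. destruct (Nat.ltb 0 p); [destruct (Rlt_dec (INR p) T)|]; lra. Qed.

Lemma sum_cutoff_le (g : nat -> R) T K M : (forall p, 0 <= g p) -> T <= INR M ->
  sum_f_R0 (fun p => cutoff T p (g p)) K <= sum_f_R0 (fun p => cutoff T p (g p)) M.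
Proof.
  intros Hg HM. set (f := fun p => cutoff T p (g p)).
  assert (Hf : forall p, 0 <= f p) by (intros; apply cutoff_nonneg, Hg).
  destruct (le_lt_dec K M) as [HKM|HMK]; [apply sum_f_R0_mono_nonneg; auto|].
  right. apply sum_f_R0_extend_zero; [lia|].
  intros p Hp. unfold f, cutoff. destruct (Nat.ltb 0 p); [|reflexivity].
  destruct (Rlt_dec (INR p) T); [|reflexivity]. apply lt_INR in Hp. lra.
Qed.

Lemma sum_cutoff_telescope (T : R) (g F : R -> R) : 1 < T -> g 1 <= F 1 ->
  (forall x, 1 <= x -> g (x + 1) <= F (x + 1) - F x) ->
  (forall x y, 1 <= x -> x <= y -> F x <= F y) ->
  forall K, (1 <= K)%nat -> sum_f_R0 (fun p => cutoff T p (g (INR p))) K <= F T.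
Proof.
  intros HT Hb Hs Hm K HK.
  assert (Inv : forall K, (1 <= K)%nat ->
     sum_f_R0 (fun p => cutoff T p (g (INR p))) K <= F (Rmin (INR K) T)).
  { clear K HK. induction K as [|K IH]; intros HK; [lia|].
    destruct (Nat.eq_dec K 0) as [->|HK0].
    - simpl. unfold cutoff. simpl. destruct (Rlt_dec 1 T); [|lra].
      rewrite Rmin_left by lra. lra.
    - specialize (IH ltac:(lia)). rewrite tech5.
      assert (HK1 : 1 <= INR K) by (apply (le_INR 1); lia).
      unfold cutoff at 2. replace (Nat.ltb 0 (S K)) with true by reflexivity.
      destruct (Rlt_dec (INR (S K)) T) as [Hlt|Hge]; rewrite S_INR in *.
      + rewrite Rmin_left in IH by lra. rewrite Rmin_left by lra.
        specialize (Hs _ HK1). lra.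
      + assert (F (Rmin (INR K) T) <= F (Rmin (INR K + 1) T)).
        { apply Hm; [apply Rmin_glb; lra|].
          unfold Rmin. destruct (Rle_dec (INR K) T), (Rle_dec (INR K + 1) T); lra. }
        lra. }
  specialize (Inv K HK). assert (F (Rmin (INR K) T) <= F T).
  { apply Hm; [|apply Rmin_r]. assert (1 <= INR K) by (apply (le_INR 1); lia).
    apply Rmin_glb; lra. }
  lra.
Qed.

Lemma sum_Rpower_le T e K : 1 < T -> 0 < e < 1 -> (1 <= K)%nat ->
  sum_f_R0 (fun p => cutoff T p (Rpower (INR p) (e - 1))) K <= 1 + (Rpower T e - 1) / e.
Proof.
  intros HT He HK.
  apply (sum_cutoff_telescope T (fun x => Rpower x (e - 1)) (fun x => 1 + (Rpower x e - 1) / e)); auto.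
  - unfold Rpower. rewrite ln_1, !Rmult_0_r, exp_0.
    replace ((1 - 1) / e) with 0 by (field; lra). lra.
  - intros x Hx. pose proof (Rpower_increment (x + 1) e ltac:(lra) He) as Hi.
    replace (x + 1 - 1) with x in Hi by ring.
    apply (Rmult_le_reg_l e); [lra|].
    replace (e * (1 + (Rpower (x + 1) e - 1) / e - (1 + (Rpower x e - 1) / e)))
      with (Rpower (x + 1) e - Rpower x e) by (field; lra). lra.
  - intros x y Hx Hxy. assert (Rpower x e <= Rpower y e) by (apply Rle_Rpower_l; lra).
    apply Rplus_le_compat_l, Rmult_le_compat_r; [left; apply Rinv_0_lt_compat|]; lra.
Qed.

Lemma sum_inv_le T K : 1 < T -> (1 <= K)%nat ->
  sum_f_R0 (fun p => cutoff T p (/ INR p)) K <= 1 + ln T.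
Proof.
  intros HT HK.
  apply (sum_cutoff_telescope T (fun x => / x) (fun x => 1 + ln x)); auto.
  - rewrite ln_1, Rinv_1. lra.
  - intros x Hx. pose proof (inv_le_ln_increment (x + 1) ltac:(lra)) as Hi.
    replace (x + 1 - 1) with x in Hi by ring. lra.
  - intros x y Hx Hxy. pose proof (ln_le x y ltac:(lra) Hxy). lra.
Qed.

(* Once K >= Y the sum is at most Y^(-q) + (Y^(1-q) - K^(1-q))/(q-1): the
   first term p >= Y costs at most Y^(-q), the later ones telescope. *)
Lemma sum_tail_Rpower_le q Y K : 1 < q -> 1 <= Y ->
  sum_f_R0 (fun p => if Nat.ltb 0 p then (if Rlt_dec (INR p) Y then 0 else Rpower (INR p) (- q)) else 0) K
   <= Rpower Y (- q) + Rpower Y (1 - q) / (q - 1).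
Proof.
  intros Hq HY.
  set (f := fun p => if Nat.ltb 0 p then (if Rlt_dec (INR p) Y then 0 else Rpower (INR p) (- q)) else 0).
  set (B := fun x => Rpower Y (- q) + (Rpower Y (1 - q) - Rpower x (1 - q)) / (q - 1)).
  assert (Hpos : forall x, 0 <= Rpower x (1 - q) / (q - 1)).
  { intros x. apply Rdiv_le_0_compat; [left; apply Rpower_pos | lra]. }
  assert (Inv : forall K : nat, (INR K < Y -> sum_f_R0 f K = 0) /\ (Y <= INR K -> sum_f_R0 f K <= B (INR K))).
  { clear K. induction K as [|K [IH1 IH2]].
    - split; intros H; [reflexivity | simpl in H; lra].
    - assert (Hf : f (S K) = if Rlt_dec (INR K + 1) Y then 0 else Rpower (INR K + 1) (- q))
        by (unfold f; rewrite S_INR; reflexivity).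
      rewrite tech5, Hf, S_INR. pose proof (pos_INR K).
      destruct (Rlt_dec (INR K + 1) Y) as [Hlt|Hge].
      + split; intros H'; [rewrite IH1 by lra; ring | lra].
      + split; intros H'; [lra|]. unfold B.
        destruct (Rlt_dec (INR K) Y) as [HKY|HKY].
        * rewrite IH1 by lra.
          assert (Rpower (INR K + 1) (- q) <= Rpower Y (- q)) by (apply Rpower_neg_anti; lra).
          assert (Rpower (INR K + 1) (1 - q) <= Rpower Y (1 - q)).
          { replace (1 - q) with (- (q - 1)) by ring. apply Rpower_neg_anti; lra. }
          assert (0 <= (Rpower Y (1 - q) - Rpower (INR K + 1) (1 - q)) / (q - 1))
            by (apply Rdiv_le_0_compat; lra).
          lra.
        * pose proof (IH2 ltac:(lra)) as HB. unfold B in HB.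
          pose proof (Rpower_tail_increment (INR K + 1) q ltac:(lra) Hq) as Hi.
          replace (INR K + 1 - 1) with (INR K) in Hi by ring.
          assert (Rpower Y (- q) + (Rpower Y (1 - q) - Rpower (INR K) (1 - q)) / (q - 1) +
             (Rpower (INR K) (1 - q) - Rpower (INR K + 1) (1 - q)) / (q - 1) =
             Rpower Y (- q) + (Rpower Y (1 - q) - Rpower (INR K + 1) (1 - q)) / (q - 1)) by (field; lra).
          lra. }
  destruct (Inv K) as [I1 I2].
  assert (0 <= Rpower Y (- q)) by (left; apply Rpower_pos).
  pose proof (Hpos Y). pose proof (Hpos (INR K)).
  destruct (Rlt_dec (INR K) Y) as [HKY|HKY]; [rewrite I1 by auto; lra|].
  specialize (I2 ltac:(lra)). unfold B in I2.
  assert ((Rpower Y (1 - q) - Rpower (INR K) (1 - q)) / (q - 1)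
          = Rpower Y (1 - q) / (q - 1) - Rpower (INR K) (1 - q) / (q - 1)) by (field; lra).
  lra.
Qed.

Lemma zeta_partial_le q Y M K : 1 < q -> 1 <= Y -> Y <= INR M ->
  zeta_partial q K <= sum_f_R0 (fun p => cutoff Y p (Rpower (INR p) (- q))) M
     + (Rpower Y (- q) + Rpower Y (1 - q) / (q - 1)).
Proof.
  intros Hq HY HM.
  set (h := fun p => if Nat.ltb 0 p then Rpower (INR p) (- q) else 0).
  set (t := fun p => if Nat.ltb 0 p then (if Rlt_dec (INR p) Y then 0 else Rpower (INR p) (- q)) else 0).
  assert (E1 : zeta_partial q K = sum_f_R0 h (S K)).
  { rewrite (decomp_sum h (S K)) by lia. simpl pred. unfold zeta_partial.
    replace (h 0%nat) with 0 by reflexivity. rewrite Rplus_0_l.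
    apply sum_eq. intros i _. unfold h. simpl Nat.ltb. cbv iota.
    rewrite Rpower_Ropp, Nat.add_1_r. reflexivity. }
  assert (E2 : sum_f_R0 h (S K)
               = sum_f_R0 (fun p => cutoff Y p (Rpower (INR p) (- q))) (S K) + sum_f_R0 t (S K)).
  { rewrite <- sum_plus. apply sum_eq. intros i _. unfold h, t, cutoff.
    destruct (Nat.ltb 0 i); [|ring]. destruct (Rlt_dec (INR i) Y); ring. }
  rewrite E1, E2.
  pose proof (sum_cutoff_le (fun p => Rpower (INR p) (- q)) Y (S K) M
                (fun p => Rlt_le _ _ (Rpower_pos _ _)) HM).
  pose proof (sum_tail_Rpower_le q Y (S K) Hq HY). fold t in H0. lra.
Qed.

(* The partial sums increase and are bounded, so they converge to zeta(q). *)
Lemma zeta_cv q : 1 < q -> Un_cv (zeta_partial q) (riemann_zeta q).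
Proof.
  intros Hq. unfold riemann_zeta. apply epsilon_spec.
  assert (Hg : Un_growing (zeta_partial q)).
  { intros n. unfold zeta_partial. rewrite tech5. pose proof (Rpower_pos (INR (S n + 1)) q).
    pose proof (Rinv_0_lt_compat _ H). lra. }
  assert (Hb : has_ub (zeta_partial q)).
  { exists (sum_f_R0 (fun p => cutoff 1 p (Rpower (INR p) (- q))) 1
            + (Rpower 1 (- q) + Rpower 1 (1 - q) / (q - 1))).
    intros x [n ->]. apply zeta_partial_le; simpl; lra. }
  destruct (growing_cv _ Hg Hb) as [l Hl]. exists l; exact Hl.
Qed.

Lemma lim_le (u : nat -> R) l B : Un_cv u l -> (forall n, u n <= B) -> l <= B.
Proof.
  intros Hu Hb. destruct (Rle_dec l B) as [|Hn]; auto. exfalso.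
  destruct (Hu (l - B) ltac:(lra)) as [N HN]. specialize (HN N (Nat.le_refl N)).
  unfold Rdist in HN. specialize (Hb N). apply Rabs_def2 in HN. lra.
Qed.

Lemma zeta_le q Y M : 1 < q -> 1 <= Y -> Y <= INR M ->
  riemann_zeta q <= sum_f_R0 (fun p => cutoff Y p (Rpower (INR p) (- q))) M
     + (Rpower Y (- q) + Rpower Y (1 - q) / (q - 1)).
Proof.
  intros. apply (lim_le (zeta_partial q)); [apply zeta_cv; auto|].
  intros n. apply zeta_partial_le; auto.
Qed.

Lemma cauchy_product_le (a b : nat -> R) N : (forall p, 0 <= a p) -> (forall p, 0 <= b p) ->
  sum_f_R0 (fun m => sum_f_R0 (fun n => a n * b (m - n)%nat) m) N <= sum_f_R0 a N * sum_f_R0 b N.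
Proof.
  intros Ha Hb. destruct N as [|N]; [simpl; lra|].
  rewrite (cauchy_finite a b (S N)) by lia.
  assert (0 <= sum_f_R0 (fun k => sum_f_R0 (fun l => a (S (l + k)) * b (S N - l)%nat)
                                   (pred (S N - k))) (pred (S N))).
  { apply cond_pos_sum. intros k. apply cond_pos_sum. intros l. apply Rmult_le_pos; auto. }
  lra.
Qed.

Lemma sum_pairs_eq (c : nat -> R) N :
  sum_f_R0 (fun m => sum_f_R0 (fun n => if Nat.ltb n m then c n * c m else 0) m) N =
  (sum_f_R0 c N * sum_f_R0 c N - sum_f_R0 (fun n => c n * c n) N) / 2.
Proof.
  induction N; [simpl; field|].
  rewrite !tech5, IHN.
  assert (sum_f_R0 (fun n => if Nat.ltb n (S N) then c n * c (S N) else 0) N = sum_f_R0 c N * c (S N)).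
  { rewrite Rmult_comm, scal_sum. apply sum_eq. intros i Hi.
    replace (Nat.ltb i (S N)) with true by (symmetry; apply Nat.ltb_lt; lia). reflexivity. }
  rewrite H. replace (Nat.ltb (S N) (S N)) with false by (symmetry; apply Nat.ltb_irrefl). field.
Qed.

Definition weight (s T : R) (m n : nat) : R :=
  if andb (Nat.ltb 0 n) (Nat.ltb n m) then
    (if Rlt_dec (INR m) T then / (Rpower (INR n * INR m) s * ln (INR m / INR n)) else 0)
  else 0.

Lemma ln_ratio_pos n m : (0 < n)%nat -> (n < m)%nat -> 0 < ln (INR m / INR n).
Proof.
  intros Hn Hnm. assert (0 < INR n) by (apply lt_0_INR; lia).
  assert (INR n < INR m) by (apply lt_INR; lia).
  rewrite ln_div by lra. pose proof (ln_increasing _ _ H H0). lra.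
Qed.

Lemma weight_nonneg s T m n : 0 <= weight s T m n.
Proof.
  unfold weight. destruct (Nat.ltb 0 n) eqn:E0; simpl; [|lra].
  destruct (Nat.ltb n m) eqn:E1; [|lra]. destruct (Rlt_dec (INR m) T); [|lra].
  apply Nat.ltb_lt in E0, E1. pose proof (ln_ratio_pos n m E0 E1).
  pose proof (Rpower_pos (INR n * INR m) s). left. apply Rinv_0_lt_compat. nra.
Qed.

(* 1/p >= 0 for every natural p (with 1/0 = 0). *)
Lemma inv_INR_nonneg p : 0 <= / INR p.
Proof. destruct p; [simpl; rewrite Rinv_0; lra|]. left. apply Rinv_0_lt_compat, lt_0_INR. lia. Qed.

(* Splitting a weight with 1/log(m/n) <= m/(m-n) = n/(m-n) + 1 and
   (nm)^s >= n^(2s): for 0 < n < m,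
   1/((nm)^s log(m/n)) <= n^(1-2s)/(m-n) + n^(-s) m^(-s). *)
Lemma weight_split n m s : 0 < s -> 0 < n -> n < m ->
  / (Rpower (n * m) s * ln (m / n))
  <= Rpower n ((2 - 2 * s) - 1) * / (m - n) + Rpower n (- s) * Rpower m (- s).
Proof.
  intros Hs Hn Hnm.
  set (Pn := Rpower n s). set (Pm := Rpower m s).
  assert (HPn : 0 < Pn) by apply Rpower_pos. assert (HPm : 0 < Pm) by apply Rpower_pos.
  assert (HPnm : Pn <= Pm) by (apply Rle_Rpower_l; lra).
  assert (Ea : Rpower n ((2 - 2 * s) - 1) = n / (Pn * Pn)).
  { replace ((2 - 2 * s) - 1) with (1 + (- s + - s)) by ring.
    rewrite !Rpower_plus, !Rpower_Ropp, Rpower_1 by lra. fold Pn. field. lra. }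
  rewrite Ea, !Rpower_Ropp, <- Rpower_mult_distr by lra. fold Pn Pm.
  rewrite Rinv_mult.
  apply Rle_trans with (/ (Pn * Pm) * (m / (m - n))).
  { apply Rmult_le_compat_l; [left; apply Rinv_0_lt_compat; nra | apply inv_ln_ratio; lra]. }
  replace (/ (Pn * Pm) * (m / (m - n))) with (n / (Pn * Pm * (m - n)) + / Pn * / Pm) by (field; lra).
  apply Rplus_le_compat_r.
  replace (n / (Pn * Pn) * / (m - n)) with (n / (Pn * Pn * (m - n))) by (field; lra).
  unfold Rdiv. apply Rmult_le_compat_l; [lra|]. apply Rinv_le_contravar.
  - apply Rmult_lt_0_compat; nra.
  - apply Rmult_le_compat_r; [lra|]. apply Rmult_le_compat_l; lra.
Qed.

(* [weight_split] with the cut-offs: every factor on the right is below T. *)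
Lemma weight_le s T m n : 0 < s -> (n <= m)%nat ->
  weight s T m n <= cutoff T n (Rpower (INR n) ((2 - 2 * s) - 1)) * cutoff T (m - n) (/ INR (m - n))
     + (if Nat.ltb n m then cutoff T n (Rpower (INR n) (- s)) * cutoff T m (Rpower (INR m) (- s)) else 0).
Proof.
  intros Hs Hnm.
  assert (R0 : 0 <= cutoff T n (Rpower (INR n) ((2 - 2 * s) - 1)) * cutoff T (m - n) (/ INR (m - n))).
  { apply Rmult_le_pos; apply cutoff_nonneg; [left; apply Rpower_pos | apply inv_INR_nonneg]. }
  assert (R1 : 0 <= (if Nat.ltb n m then cutoff T n (Rpower (INR n) (- s)) * cutoff T m (Rpower (INR m) (- s)) else 0)).
  { destruct (Nat.ltb n m); [|lra]. apply Rmult_le_pos; apply cutoff_nonneg; left; apply Rpower_pos. }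
  unfold weight. destruct (Nat.ltb 0 n) eqn:E0; simpl andb; [|lra].
  destruct (Nat.ltb n m) eqn:E1; [|lra].
  destruct (Rlt_dec (INR m) T) as [HmT|]; [|lra].
  apply Nat.ltb_lt in E0. apply Nat.ltb_lt in E1.
  assert (Hn : 0 < INR n) by (apply lt_0_INR; lia).
  assert (Hnm' : INR n < INR m) by (apply lt_INR; lia).
  assert (Hmn : INR (m - n) = INR m - INR n) by (apply minus_INR; lia).
  unfold cutoff.
  replace (Nat.ltb 0 n) with true by (symmetry; apply Nat.ltb_lt; lia).
  replace (Nat.ltb 0 (m - n)) with true by (symmetry; apply Nat.ltb_lt; lia).
  replace (Nat.ltb 0 m) with true by (symmetry; apply Nat.ltb_lt; lia).
  destruct (Rlt_dec (INR n) T); [|lra].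
  destruct (Rlt_dec (INR (m - n)) T); [|rewrite Hmn in *; lra].
  destruct (Rlt_dec (INR m) T); [|lra].
  rewrite Hmn. apply weight_split; auto.
Qed.

(* Summing [weight_le]: the first parts form a Cauchy product, the second parts
   a sum over pairs. *)
Lemma weight_sum_le s T M : 0 < s ->
  sum_f_R0 (fun m => sum_f_R0 (fun n => weight s T m n) m) M <=
  sum_f_R0 (fun p => cutoff T p (Rpower (INR p) ((2 - 2 * s) - 1))) M * sum_f_R0 (fun p => cutoff T p (/ INR p)) M
  + (sum_f_R0 (fun p => cutoff T p (Rpower (INR p) (- s))) M * sum_f_R0 (fun p => cutoff T p (Rpower (INR p) (- s))) M
     - sum_f_R0 (fun p => cutoff T p (Rpower (INR p) (- s)) * cutoff T p (Rpower (INR p) (- s))) M) / 2.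
Proof.
  intros Hs. rewrite <- sum_pairs_eq.
  eapply Rle_trans; [|apply Rplus_le_compat_r; apply cauchy_product_le].
  2: { intros; apply cutoff_nonneg; left; apply Rpower_pos. }
  2: { intros; apply cutoff_nonneg; apply inv_INR_nonneg. }
  rewrite <- sum_plus. apply sum_Rle. intros m _. rewrite <- sum_plus. apply sum_Rle. intros n Hn.
  apply weight_le; auto.
Qed.

Lemma is_RInt_sum_le (f : nat -> R -> R) (B : nat -> R) a b N :
  (forall i, (i <= N)%nat -> exists v, is_RInt (f i) a b v /\ v <= B i) ->
  exists v, is_RInt (fun t => sum_f_R0 (fun i => f i t) N) a b v /\ v <= sum_f_R0 B N.
Proof.
  induction N; intros H.
  - destruct (H 0%nat (Nat.le_refl 0)) as [v [Hv Hb]]. exists v. auto.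
  - destruct IHN as [v1 [H1 B1]]; [intros i Hi; apply H; lia|].
    destruct (H (S N) (Nat.le_refl _)) as [v2 [H2 B2]].
    exists (v1 + v2). split; [exact (is_RInt_plus _ _ _ _ _ _ H1 H2) | simpl; lra].
Qed.

Lemma is_RInt_zero (f : R -> R) a b : a <= b -> (forall t, a < t < b -> f t = 0) -> is_RInt f a b 0.
Proof.
  intros Hab Hf. pose proof (is_RInt_const a b (0:R)) as Hc.
  assert (E : scal (b - a) (0:R) = 0) by (unfold scal; simpl; unfold mult; simpl; ring).
  eapply is_RInt_ext; [|exact (eq_ind _ (is_RInt (fun _ => 0) a b) Hc _ E)].
  intros x Hx. rewrite Rmin_left, Rmax_right in Hx by lra. symmetry; apply Hf; lra.
Qed.

Lemma is_RInt_cos (l P a b : R) : 0 < l -> 0 < P ->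
  is_RInt (fun t => cos (t * l) / P) a b ((sin (b * l) - sin (a * l)) / (l * P)).
Proof.
  intros Hl HP.
  replace ((sin (b * l) - sin (a * l)) / (l * P)) with
     (minus ((fun t => sin (t * l) / (l * P)) b) ((fun t => sin (t * l) / (l * P)) a))
    by (unfold minus, plus, opp; simpl; field; lra).
  apply (is_RInt_derive (fun t => sin (t * l) / (l * P)) (fun t => cos (t * l) / P)).
  - intros x _. auto_derive; auto. field; lra.
  - intros x _. apply (@ex_derive_continuous R_AbsRing R_NormedModule). auto_derive. auto.
Qed.

Lemma pair_term_integral_le s T H m n : 0 < H -> H <= T ->
  exists v, is_RInt (fun t => pair_term s t m n) H T v /\ v <= 2 * weight s T m n.
Proof.
  intros HH HT. unfold weight.
  destruct (andb (Nat.ltb 0 n) (Nat.ltb n m)) eqn:E.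
  2: { exists 0. split; [|lra]. apply is_RInt_zero; auto. intros t _. unfold pair_term.
       rewrite E. destruct (Rlt_dec (INR m) t); reflexivity. }
  apply Bool.andb_true_iff in E. destruct E as [E0 E1]. apply Nat.ltb_lt in E0, E1.
  set (P := Rpower (INR n * INR m) s). set (l := ln (INR m / INR n)).
  assert (HP : 0 < P) by apply Rpower_pos.
  assert (Hl : 0 < l) by (apply ln_ratio_pos; auto).
  assert (Hpt : forall t, INR m < t -> pair_term s t m n = cos (t * l) / P).
  { intros t Ht. unfold pair_term. destruct (Rlt_dec (INR m) t); [|lra].
    replace (andb (Nat.ltb 0 n) (Nat.ltb n m)) with true; [reflexivity|].
    symmetry. apply Bool.andb_true_iff; split; apply Nat.ltb_lt; lia. }
  assert (Hz : forall t, t <= INR m -> pair_term s t m n = 0).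
  { intros t Ht. unfold pair_term. destruct (Rlt_dec (INR m) t); [lra|reflexivity]. }
  destruct (Rlt_dec (INR m) T) as [HmT|HmT].
  2: { exists 0. split; [|lra]. apply is_RInt_zero; auto. intros t Ht. apply Hz. lra. }
  (* on [a, T] with a >= m the integrand is cos(t l)/P *)
  assert (Hv : forall a, a <= T -> INR m <= a ->
            exists v, is_RInt (fun t => pair_term s t m n) a T v /\ v <= 2 * / (P * l)).
  { intros a Ha Hma. exists ((sin (T * l) - sin (a * l)) / (l * P)). split.
    - eapply is_RInt_ext; [|apply is_RInt_cos; auto]. intros x Hx.
      rewrite Rmin_left, Rmax_right in Hx by lra. symmetry; apply Hpt; lra.
    - pose proof (SIN_bound (T * l)). pose proof (SIN_bound (a * l)).
      replace (2 * / (P * l)) with (2 / (l * P)) by (field; lra).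
      unfold Rdiv. apply Rmult_le_compat_r; [left; apply Rinv_0_lt_compat; nra | lra]. }
  destruct (Rle_dec (INR m) H) as [HmH|HmH]; [apply Hv; lra|].
  destruct (Hv (INR m) ltac:(lra) ltac:(lra)) as [v [Hv1 Hv2]].
  exists (0 + v). split; [|lra].
  apply (is_RInt_Chasles _ H (INR m) T 0 v); auto.
  apply is_RInt_zero; [lra|]. intros t Ht. apply Hz; lra.
Qed.

Lemma up_le t T : t <= T -> (up t <= up T)%Z.
Proof.
  intros H. destruct (archimed t) as [A1 A2]. destruct (archimed T) as [B1 B2].
  destruct (Z.le_gt_cases (up t) (up T)) as [|Hg]; auto.
  assert (IZR (up T) + 1 <= IZR (up t)) by (rewrite <- plus_IZR; apply IZR_le; lia).
  lra.
Qed.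

Lemma INR_up_pos t : 0 < t -> INR (Z.to_nat (up t)) = IZR (up t) /\ (0 < up t)%Z.
Proof.
  intros Ht. destruct (archimed t) as [A1 _].
  assert (Hu : (0 < up t)%Z) by (apply lt_IZR; lra).
  rewrite INR_IZR_INZ, Z2Nat.id by lia. auto.
Qed.

Lemma inner_sum_eq s t T : 0 < t -> t <= T ->
  inner_sum s t = sum_f_R0 (fun m => sum_f_R0 (fun n => pair_term s t m n) m) (Z.to_nat (up T)).
Proof.
  intros Ht HtT. unfold inner_sum. symmetry.
  destruct (INR_up_pos t Ht) as [Et Hut]. pose proof (up_le t T HtT).
  apply sum_f_R0_extend_zero; [apply Z2Nat.inj_le; lia|].
  intros m Hm. apply lt_INR in Hm. rewrite Et in Hm.
  apply sum_eq_R0. intros n _. unfold pair_term.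
  destruct (archimed t). destruct (Rlt_dec (INR m) t); [lra | reflexivity].
Qed.

Lemma integral_le_weights s T H (pr : Riemann_integrable (fun t => inner_sum s t) H T) : 0 < H -> H <= T ->
  RiemannInt pr <= 2 * sum_f_R0 (fun m => sum_f_R0 (fun n => weight s T m n) m) (Z.to_nat (up T)).
Proof.
  intros HH HT.
  destruct (is_RInt_sum_le (fun m t => sum_f_R0 (fun n => pair_term s t m n) m)
              (fun m => sum_f_R0 (fun n => 2 * weight s T m n) m) H T (Z.to_nat (up T))) as [v [Hv Hb]].
  { intros m _. apply is_RInt_sum_le. intros n _. apply pair_term_integral_le; auto. }
  assert (Hi : is_RInt (fun t => inner_sum s t) H T v).
  { eapply is_RInt_ext; [|exact Hv]. intros x Hx. rewrite Rmin_left, Rmax_right in Hx by lra.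
    symmetry. apply inner_sum_eq; lra. }
  rewrite <- RInt_Reals, (is_RInt_unique _ _ _ _ Hi).
  eapply Rle_trans; [exact Hb|]. right.
  rewrite scal_sum. apply sum_eq. intros m _. rewrite Rmult_comm, scal_sum. apply sum_eq. intros n _. ring.
Qed.

(* Coefficient of T in the bound, without its two smallest terms. *)
Definition Gf (s l : R) : R :=
  l * exp ((1 - 2 * s) * l) / (2 * (1 - s)) - (2 * s - 1) * l * exp (- l) / (2 * (1 - s))
  + (2 - s) * exp ((1 - 2 * s) * l) / (2 * (1 - s) ^ 2) - s * exp (- s * l) / (1 - s) ^ 2.

Definition dGf (s l : R) : R :=
  (exp ((1 - 2 * s) * l) + l * (1 - 2 * s) * exp ((1 - 2 * s) * l)) / (2 * (1 - s))
  - (2 * s - 1) * (exp (- l) - l * exp (- l)) / (2 * (1 - s))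
  + (2 - s) * (1 - 2 * s) * exp ((1 - 2 * s) * l) / (2 * (1 - s) ^ 2)
  + s * s * exp (- s * l) / (1 - s) ^ 2.

Lemma Gf_deriv s l : s < 1 -> derivable_pt_lim (Gf s) l (dGf s l).
Proof.
  intros Hs. apply is_derive_Reals. unfold Gf, dGf. auto_derive; auto.
  match goal with |- ?a = ?b => change (@eq R a b) end. field. lra.
Qed.

(* dGf = e^((1-2s)l) dGf_core / (2(1-s)^2), so dGf has the sign of dGf_core. *)
Definition dGf_core (s l : R) : R :=
  (1 - s) * (1 + (1 - 2 * s) * l) + (1 - s) * (2 * s - 1) * ((l - 1) * exp ((2 * s - 2) * l))
  + (2 - s) * (1 - 2 * s) + 2 * s * s * exp ((s - 1) * l).

Lemma dGf_factor s l : s < 1 ->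
  dGf s l = exp ((1 - 2 * s) * l) * dGf_core s l / (2 * (1 - s) ^ 2).
Proof.
  intros Hs. unfold dGf, dGf_core.
  replace (exp (- l)) with (exp ((1 - 2 * s) * l) * exp ((2 * s - 2) * l))
    by (rewrite <- exp_plus; f_equal; ring).
  replace (exp (- s * l)) with (exp ((1 - 2 * s) * l) * exp ((s - 1) * l))
    by (rewrite <- exp_plus; f_equal; ring).
  field. lra.
Qed.

(* e^y >= (1 + y/4)^4 for y >= 0, a polynomial lower bound used to
   bound e^(-23(1-s)) numerically. *)
Lemma exp_ge_pow4 y : 0 <= y -> (1 + y / 4) ^ 4 <= exp y.
Proof.
  intros Hy. replace (exp y) with (exp (y / 4) ^ 4).
  - apply pow_incr. split; [lra|]. apply exp_ineq1_le.
  - simpl. rewrite Rmult_1_r, <- !exp_plus. f_equal. field.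
Qed.

Lemma exp_le_mono a b : a <= b -> exp a <= exp b.
Proof. intros [H|H]; [left; apply exp_increasing; auto | subst; lra]. Qed.

Lemma linear_exp_decay x l : 1 <= 44 * x -> 23 <= l ->
  (l - 1) * exp (- (2 * x) * l) <= 22 * exp (- (46 * x)).
Proof.
  intros Hx Hl.
  replace (exp (- (2 * x) * l)) with (exp (- (46 * x)) * / exp (2 * x * (l - 23)))
    by (rewrite <- exp_Ropp, <- exp_plus; f_equal; ring).
  pose proof (exp_ineq1_le (2 * x * (l - 23))). pose proof (exp_pos (2 * x * (l - 23))).
  pose proof (exp_pos (- (46 * x))).
  assert ((l - 1) * / exp (2 * x * (l - 23)) <= 22).
  { apply (Rmult_le_reg_r (exp (2 * x * (l - 23)))); [lra|].
    rewrite Rmult_assoc, Rinv_l by lra. nra. }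
  nra.
Qed.

(* The numerical heart: with x = 1 - s in (0.0277, 0.4792) and u = e^(-23x),
   the upper bound for [dGf_core] obtained at l = 23 is negative.  The bound
   (1 + 23x/4)^4 u <= 1 forces u <= 0.56, and u <= 0.02 once x > 0.3. *)
Lemma core_poly_nonpos x u : 277/10000 < x < 4792/10000 -> 0 < u ->
  (1 + 23 * x / 4) ^ 4 * u <= 1 ->
  x * (1 - 23 * (1 - 2 * x)) + x * (1 - 2 * x) * (22 * (u * u))
  + (2 - (1 - x)) * (1 - 2 * (1 - x)) + 2 * (1 - x) * (1 - x) * u <= 0.
Proof.
  intros Hx Hu Hub. destruct (Rle_dec x (3/10)) as [Hx3|Hx3].
  - assert (u <= 56/100).
    { assert (18057/10000 <= (1 + 23 * x / 4) ^ 4).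
      { apply Rle_trans with ((1 + 23 * (277/10000) / 4) ^ 4); [lra|]. apply pow_incr. lra. }
      nra. }
    nra.
  - assert (u <= 2/100).
    { assert (50 <= (1 + 23 * x / 4) ^ 4).
      { apply Rle_trans with ((1 + 23 * (3/10) / 4) ^ 4); [lra|]. apply pow_incr. lra. }
      nra. }
    nra.
Qed.

(* dGf_core s l <= 0 for l >= 23: each l-dependent term is at most its value at
   l = 23, which reduces the claim to [core_poly_nonpos]. *)
Lemma dGf_core_nonpos s l : 5208 / 10000 < s -> s < 9723 / 10000 -> 23 <= l -> dGf_core s l <= 0.
Proof.
  intros Hs1 Hs2 Hl. unfold dGf_core.
  pose (u := exp (- (23 * (1 - s)))).
  assert (Hx : 277/10000 < 1 - s < 4792/10000) by lra.
  assert (Hu : 0 < u) by apply exp_pos.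
  assert (HZ : exp ((s - 1) * l) <= u) by (apply exp_le_mono; nra).
  assert (HY : (l - 1) * exp ((2 * s - 2) * l) <= 22 * (u * u)).
  { replace ((2 * s - 2) * l) with (- (2 * (1 - s)) * l) by ring.
    replace (u * u) with (exp (- (46 * (1 - s)))) by (unfold u; rewrite <- exp_plus; f_equal; ring).
    apply linear_exp_decay; lra. }
  assert (Hub : (1 + 23 * (1 - s) / 4) ^ 4 * u <= 1).
  { unfold u. rewrite exp_Ropp. pose proof (exp_ge_pow4 (23 * (1 - s)) ltac:(lra)).
    pose proof (exp_pos (23 * (1 - s))).
    apply (Rmult_le_reg_r (exp (23 * (1 - s)))); [lra|]. rewrite Rmult_assoc, Rinv_l by lra. lra. }
  pose proof (core_poly_nonpos (1 - s) u Hx Hu Hub) as Hp.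
  assert (0 <= (1 - s) * (2 * s - 1) * (l - 23)) by (apply Rmult_le_pos; nra).
  assert ((1 - s) * (2 * s - 1) * ((l - 1) * exp ((2 * s - 2) * l))
          <= (1 - s) * (2 * s - 1) * (22 * (u * u))) by (apply Rmult_le_compat_l; nra).
  assert (2 * s * s * exp ((s - 1) * l) <= 2 * s * s * u) by (apply Rmult_le_compat_l; nra).
  nra.
Qed.

Lemma Gf_mono s l L : 5208 / 10000 < s -> s < 9723 / 10000 -> 23 <= L -> L <= l -> Gf s l <= Gf s L.
Proof.
  intros Hs1 Hs2 HL [Hlt|Heq]; [|subst; lra].
  destruct (MVT_cor2 (Gf s) (dGf s) L l Hlt) as [c [Hc1 Hc2]].
  { intros c _. apply Gf_deriv. lra. }
  assert (dGf s c <= 0).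
  { rewrite dGf_factor by lra.
    pose proof (dGf_core_nonpos s c Hs1 Hs2 ltac:(lra)). pose proof (exp_pos ((1 - 2 * s) * c)).
    assert (exp ((1 - 2 * s) * c) * dGf_core s c <= 0) by nra.
    assert (0 < / (2 * (1 - s) ^ 2)) by (apply Rinv_0_lt_compat; nra).
    unfold Rdiv. nra. }
  nra.
Qed.

(* Closed-form majorant of the weight sum over pairs below T (steps 2 and 3). *)
Definition majorant (s T : R) : R :=
  (1 + (Rpower T (2 - 2 * s) - 1) / (2 - 2 * s)) * (1 + ln T)
  + ((1 + (Rpower T (1 - s) - 1) / (1 - s)) ^ 2 - riemann_zeta (2 * s)
     + Rpower T (- (2 * s)) + Rpower T (1 - 2 * s) / (2 * s - 1)) / 2.

Lemma weight_sum_le_majorant s T M : 1 / 2 < s < 1 -> 1 < T -> T <= INR M ->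
  sum_f_R0 (fun m => sum_f_R0 (fun n => weight s T m n) m) M <= majorant s T.
Proof.
  intros Hs HT HM.
  assert (HM1 : (1 <= M)%nat) by (destruct M; [simpl in HM; lra | lia]).
  set (c := fun p => cutoff T p (Rpower (INR p) (- s))).
  set (SA := sum_f_R0 (fun p => cutoff T p (Rpower (INR p) ((2 - 2 * s) - 1))) M).
  set (SB := sum_f_R0 (fun p => cutoff T p (/ INR p)) M).
  set (SC := sum_f_R0 c M).
  set (SC2 := sum_f_R0 (fun p => c p * c p) M).
  assert (Hw : sum_f_R0 (fun m => sum_f_R0 (fun n => weight s T m n) m) M
               <= SA * SB + (SC * SC - SC2) / 2) by (apply weight_sum_le; lra).
  assert (HSA : 0 <= SA <= 1 + (Rpower T (2 - 2 * s) - 1) / (2 - 2 * s)).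
  { split; [apply cond_pos_sum; intros; apply cutoff_nonneg; left; apply Rpower_pos|].
    apply sum_Rpower_le; auto; lra. }
  assert (HSB : 0 <= SB <= 1 + ln T).
  { split; [apply cond_pos_sum; intros; apply cutoff_nonneg, inv_INR_nonneg|].
    apply sum_inv_le; auto. }
  assert (HSC : 0 <= SC <= 1 + (Rpower T (1 - s) - 1) / (1 - s)).
  { split; [apply cond_pos_sum; intros; apply cutoff_nonneg; left; apply Rpower_pos|].
    unfold SC, c. rewrite (sum_eq _ (fun p => cutoff T p (Rpower (INR p) ((1 - s) - 1)))).
    - apply sum_Rpower_le; auto; lra.
    - intros i _. do 3 f_equal. ring. }
  (* the diagonal sum of c^2 is a partial sum of zeta(2s) *)
  assert (HSC2 : riemann_zeta (2 * s) - Rpower T (- (2 * s)) - Rpower T (1 - 2 * s) / (2 * s - 1) <= SC2).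
  { pose proof (zeta_le (2 * s) T M ltac:(lra) ltac:(lra) HM) as Hz.
    replace SC2 with (sum_f_R0 (fun p => cutoff T p (Rpower (INR p) (- (2 * s)))) M); [lra|].
    apply sum_eq. intros i _. unfold c, cutoff.
    destruct (Nat.ltb 0 i); [|ring]. destruct (Rlt_dec (INR i) T); [|ring].
    rewrite <- Rpower_plus. f_equal. ring. }
  assert (SA * SB <= (1 + (Rpower T (2 - 2 * s) - 1) / (2 - 2 * s)) * (1 + ln T))
    by (apply Rmult_le_compat; lra).
  assert (SC * SC <= (1 + (Rpower T (1 - s) - 1) / (1 - s)) ^ 2)
    by (simpl; rewrite Rmult_1_r; apply Rmult_le_compat; lra).
  unfold majorant. lra.
Qed.

(* Coefficient of T in the majorant, as a function of l = log T. *)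
Definition Phi (s l : R) : R :=
  Gf s l + exp (- (2 * s) * l) / (2 * (2 * s - 1)) + exp ((- 2 * s - 1) * l) / 2.

(* Constant term of the majorant. *)
Definition c0 (s : R) : R :=
  (1 - 3 * s + 3 * s ^ 2) / (2 * (1 - s) ^ 2) - riemann_zeta (2 * s) / 2.

(* Writing T = e^l, every power of T is an exponential in l, and the majorant
   becomes T * Phi s l + c0 s. *)
Lemma majorant_exp s l : 1 / 2 < s < 1 -> majorant s (exp l) = exp l * Phi s l + c0 s.
Proof.
  intros Hs. unfold majorant, Phi, Gf, c0, Rpower. rewrite ln_exp.
  set (U := exp ((1 - s) * l)). set (V := exp (- l)).
  assert (EV : V = / exp l) by apply exp_Ropp.
  replace (exp ((2 - 2 * s) * l)) with (U * U) by (unfold U; rewrite <- exp_plus; f_equal; ring).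
  replace (exp ((1 - 2 * s) * l)) with (U * U * V)
    by (unfold U, V; rewrite <- !exp_plus; f_equal; ring).
  replace (exp (- (2 * s) * l)) with (U * U * V * V)
    by (unfold U, V; rewrite <- !exp_plus; f_equal; ring).
  replace (exp (- s * l)) with (U * V) by (unfold U, V; rewrite <- !exp_plus; f_equal; ring).
  replace (exp ((- 2 * s - 1) * l)) with (U * U * V * V * V)
    by (unfold U, V; rewrite <- !exp_plus; f_equal; ring).
  rewrite EV. pose proof (exp_pos l). field. lra.
Qed.

Lemma Phi_mono s l L : 5208 / 10000 < s -> s < 9723 / 10000 -> 23 <= L -> L <= l ->
  Phi s l <= Phi s L.
Proof.
  intros Hs1 Hs2 HL HLl. unfold Phi.
  pose proof (Gf_mono s l L Hs1 Hs2 HL HLl).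
  assert (exp (- (2 * s) * l) <= exp (- (2 * s) * L)) by (apply exp_le_mono; nra).
  assert (exp ((- 2 * s - 1) * l) <= exp ((- 2 * s - 1) * L)) by (apply exp_le_mono; nra).
  assert (0 < / (2 * (2 * s - 1))) by (apply Rinv_0_lt_compat; lra).
  unfold Rdiv. nra.
Qed.

(* The majorant evaluated at T = H0, per unit of T. *)
Definition Br (s : R) : R := Phi s (ln H0) + Rmax 0 (c0 s) / H0.

(* For T >= H0: T Phi(log T) <= T Phi(log H0) and c0 <= T max(0, c0)/H0. *)
Lemma majorant_le s T : 5208 / 10000 < s -> s < 9723 / 10000 -> H0 <= T ->
  majorant s T <= T * Br s.
Proof.
  intros Hs1 Hs2 HT.
  assert (HH0 : 0 < H0) by (unfold H0; lra).
  rewrite <- (exp_ln T) by lra. rewrite majorant_exp by lra. rewrite exp_ln by lra.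
  pose proof (Phi_mono s (ln T) (ln H0) Hs1 Hs2 ln_H0_ge (ln_le H0 T HH0 HT)) as Hphi.
  assert (c0 s <= T * (Rmax 0 (c0 s) / H0)).
  { pose proof (Rmax_r 0 (c0 s)) as Hr. pose proof (Rmax_l 0 (c0 s)) as Hl.
    replace (T * (Rmax 0 (c0 s) / H0)) with (Rmax 0 (c0 s) * (T / H0)) by (field; lra).
    assert (1 <= T / H0) by (apply Rle_div_r; lra).
    nra. }
  unfold Br. nra.
Qed.

Lemma eps1_eq s H : 1 / 2 < s < 1 -> H < H0 -> eps1 s H = 4 * H0 / (H0 - H) * Br s.
Proof.
  intros Hs HH.
  assert (HH0 : 0 < H0) by (unfold H0; lra).
  unfold eps1, Br, Phi, Gf, c0, Rpower.
  replace (- 2 * s) with (- (2 * s)) by ring.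
  rewrite exp_Ropp, exp_ln by lra. field. lra.
Qed.

(* Final averaging: if I <= 2 X and 0 <= X <= T B, then the mean 2 I/(T - H)
   is at most 4 H0 B/(H0 - H) for all T >= H0, since T/(T-H) decreases in T. *)
Lemma mean_le H T Hmax I X B : 0 < H < Hmax -> Hmax <= T -> I <= 2 * X -> 0 <= X <= T * B ->
  2 / (T - H) * I <= 4 * Hmax / (Hmax - H) * B.
Proof.
  intros HH HT HI HX.
  assert (HB : 0 <= B) by nra.
  assert (Hq : T / (T - H) <= Hmax / (Hmax - H)).
  { apply (Rmult_le_reg_r ((T - H) * (Hmax - H))); [nra|].
    replace (T / (T - H) * ((T - H) * (Hmax - H))) with (T * (Hmax - H)) by (field; lra).
    replace (Hmax / (Hmax - H) * ((T - H) * (Hmax - H))) with (Hmax * (T - H)) by (field; lra).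
    nra. }
  apply Rle_trans with (4 * B * (T / (T - H))).
  - replace (4 * B * (T / (T - H))) with (2 / (T - H) * (2 * (T * B))) by (field; lra).
    apply Rmult_le_compat_l; [apply Rdiv_le_0_compat|]; lra.
  - replace (4 * Hmax / (Hmax - H) * B) with (4 * B * (Hmax / (Hmax - H))) by (field; lra).
    apply Rmult_le_compat_l; lra.
Qed.

Theorem mainTheorem8 (s H T : R)
  (hs1 : 5208 / 10000 < s) (hs2 : s < 9723 / 10000)
  (hH1 : 1000 <= H) (hH2 : H < H0) (hT : H0 <= T)
  (pr : Riemann_integrable (fun t => inner_sum s t) H T) :
  2 / (T - H) * RiemannInt pr <= eps1 s H.
Proof.
  assert (HT1 : 1 < T) by (unfold H0 in *; lra).
  set (M := Z.to_nat (up T)).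
  assert (HM : T <= INR M).
  { unfold M. destruct (INR_up_pos T ltac:(lra)) as [-> _]. destruct (archimed T). lra. }
  rewrite eps1_eq by lra.
  apply (mean_le H T H0 (RiemannInt pr) (sum_f_R0 (fun m => sum_f_R0 (fun n => weight s T m n) m) M));
    [lra | lra | apply integral_le_weights; lra | split].
  - apply cond_pos_sum. intros m. apply cond_pos_sum. intros n. apply weight_nonneg.
  - eapply Rle_trans; [apply weight_sum_le_majorant; auto; lra | apply majorant_le; auto].
Qed.
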